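(* For integers $s,t\ge0$ let $m_{i,j}^{s,t}=\int_{(0,1)^2}\frac{x^{s+i}y^{s+j}}{x+y}\left(\frac{1-x}{1+x}\right)^t\left(\frac{1-y}{1+y}\right)^tdx\,dy$, $\tau_n^{s,t}=\det(m_{i,j}^{s,t})_{i,j=0}^{n-1}$ and $\xi_n^{s,t}=\det(m_{i,j+1}^{s,t})_{i,j=0}^{n-1}$ for $n\ge1$, with $\tau_0^{s,t}=\xi_0^{s,t}=1$. Then for all $n\ge1$ and $s,t\ge0$, $$\tau_{n+1}^{s,t}\tau_{n-1}^{s+1,t}=\tau_n^{s,t}\tau_n^{s+1,t}-\big(\xi_n^{s,t}\big)^2.$$
   Context: Empty determinants equal $1$. *)

From HB Require Import structures.
From mathcomp Require Import all_boot all_order all_algebra.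
From mathcomp Require Import all_classical all_reals all_analysis.
Set Implicit Arguments. Unset Strict Implicit. Unset Printing Implicit Defensive.
Import Order.TTheory GRing.Theory Num.Theory.
Local Open Scope classical_set_scope.
Local Open Scope ring_scope.

(* The integrand is nonnegative on
   the square, so the extended-real integral is well defined; it is finite,
   and we take its real value with [fine]. *)
Definition mom (R : realType) (s t i j : nat) : R :=
  fine (\int[(@lebesgue_measure R \x @lebesgue_measure R)%E]_(z in `]0, 1[ `*` `]0, 1[)
    ((z.1 ^+ (s + i) * z.2 ^+ (s + j) / (z.1 + z.2)) *
     ((1 - z.1) / (1 + z.1)) ^+ t * ((1 - z.2) / (1 + z.2)) ^+ t)%:E).

(* tau_n^{s,t} = det (m_{i,j}^{s,t})_{i,j=0}^{n-1}; for n = 0 the empty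
   determinant is 1. *)
Definition tau (R : realType) (n s t : nat) : R :=
  \det (\matrix_(i < n, j < n) mom R s t i j).

Definition xi (R : realType) (n s t : nat) : R :=
  \det (\matrix_(i < n, j < n) mom R s t i j.+1).

From mathcomp Require Import all_boot all_order all_algebra all_fingroup.
From mathcomp Require Import all_classical all_reals all_analysis measurable_realfun.
From mathcomp Require Import ring lra.
Import Order.TTheory GRing.Theory Num.Theory.
Set Implicit Arguments. Unset Strict Implicit. Unset Printing Implicit Defensive.
Local Open Scope ring_scope.

(* The moments satisfy m^{s+1}_{i,j} = m^s_{i+1,j+1} and, by Tonelli and the
   symmetry of the integrand under (x, i) <-> (y, j), m_{i,j} = m_{j,i}.  So
   tau^{s+1}_{n-1}, tau^{s+1}_n and xi^s_n are the minors of the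
   (n+1) x (n+1) matrix (m^s_{i,j}) obtained by deleting its first and last
   rows and columns, and the identity is the Desnanot-Jacobi identity for that
   matrix; the two off-diagonal minors are transposes of each other.  The
   Desnanot-Jacobi identity is in turn Jacobi's theorem on the complementary
   minors of the adjugate, which follows from M adj(M) = det(M) after
   factoring out a block-triangular matrix. *)

Lemma det_ulsubmx_adj_unit (R : idomainType) m k (M : 'M[R]_(m.+1 + k)) :
  \det M != 0 -> \det (ulsubmx (\adj M)) = \det M ^+ m * \det (drsubmx M).
Proof.
move=> detM_neq0.
have : block_mx (ulsubmx M) (ursubmx M) (dlsubmx M) (drsubmx M) *m
       block_mx (ulsubmx (\adj M)) (ursubmx (\adj M))
                (dlsubmx (\adj M)) (drsubmx (\adj M)) =
       block_mx (\det M)%:M 0 0 (\det M)%:M.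
  by rewrite !submxK mul_mx_adj -scalar_mx_block.
rewrite mulmx_block => /eq_block_mx[adj_ul _ adj_dl _].
pose B := block_mx (ulsubmx (\adj M)) 0 (dlsubmx (\adj M)) (1%:M : 'M[R]_k).
have : \det (M *m B) = \det M ^+ m.+1 * \det (drsubmx M).
  rewrite -{1}(submxK M) mulmx_block adj_ul adj_dl !mulmx0 !mulmx1 !add0r.
  by rewrite det_ublock det_scalar.
rewrite det_mulmx det_lblock det1 mulr1 exprS -mulrA.
exact: mulfI.
Qed.

Lemma det_ulsubmx_adj (R : idomainType) m k (M : 'M[R]_(m.+1 + k)) :
  \det (ulsubmx (\adj M)) = \det M ^+ m * \det (drsubmx M).
Proof.
(* Apply the invertible case to the characteristic matrix of -M, whose
   determinant is monic, and evaluate at 0. *)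
pose N := char_poly_mx (- M).
have detN_neq0 : \det N != 0 by apply: monic_neq0; exact: char_poly_monic.
have evalN : map_mx (horner_eval 0) N = M.
  apply/matrixP=> i j; rewrite !mxE horner_evalE !hornerE opprK hornerMn hornerX.
  by rewrite mul0rn add0r.
have := congr1 (horner_eval 0) (det_ulsubmx_adj_unit detN_neq0).
by rewrite rmorphM rmorphXn -!det_map_mx map_ulsubmx map_drsubmx map_mx_adj evalN.
Qed.

Lemma det_mx22 (R : comNzRingType) (A : 'M[R]_2) :
  \det A = A 0 0 * A 1 1 - A 0 1 * A 1 0.
Proof.
rewrite (expand_det_row _ 0) !big_ord_recl big_ord0 /cofactor !det_mx11 !mxE /=.
have -> : lift 0 0 = 1 :> 'I_2 by apply: val_inj.
have -> : lift 1 0 = 0 :> 'I_2 by apply: val_inj.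
by rewrite addr0 expr0 mul1r expr1 mulN1r mulrN.
Qed.

Lemma det_row_perm (R : comNzRingType) n (s : 'S_n) (A : 'M[R]_n) :
  \det (row_perm s A) = (-1) ^+ s * \det A.
Proof. by rewrite row_permE det_mulmx det_perm. Qed.

Lemma det_col_perm (R : comNzRingType) n (s : 'S_n) (A : 'M[R]_n) :
  \det (col_perm s A) = (-1) ^+ s * \det A.
Proof. by rewrite col_permE det_mulmx det_perm odd_permV mulrC. Qed.

Lemma det_conj_perm (R : comNzRingType) n (s : 'S_n) (A : 'M[R]_n) :
  \det (row_perm s (col_perm s A)) = \det A.
Proof. by rewrite det_row_perm det_col_perm mulrA -signr_addb addbb mul1r. Qed.

Definition ord_pred_perm n : 'S_n := perm (@ord_pred_inj n).

Lemma ord_pred_permE k (i : 'I_k.+1) :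
  val (ord_pred_perm k.+1 i) = if val i == 0 then k else (val i).-1.
Proof.
rewrite permE /=; case: i => [[|i] lt_ik] /=; first by rewrite modn_small.
by rewrite modnDr modn_small // ltnW.
Qed.

Lemma desnanot_jacobi (R : idomainType) k (A : nat -> nat -> R) :
  \det (\matrix_(i < k.+2, j < k.+2) A i j) *
    \det (\matrix_(i < k, j < k) A i.+1 j.+1) =
  \det (\matrix_(i < k.+1, j < k.+1) A i j) *
    \det (\matrix_(i < k.+1, j < k.+1) A i.+1 j.+1) -
  \det (\matrix_(i < k.+1, j < k.+1) A i j.+1) *
    \det (\matrix_(i < k.+1, j < k.+1) A i.+1 j).
Proof.
(* p lists the indices as 0, k+1, 1, ..., k, so that the two deleted indices
   become the leading 2 x 2 block and Jacobi's theorem applies. *)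
pose h := ord_pred_perm k.+1; pose p : 'S_(2 + k) := lift0_perm h.
pose pv i := if i == 0 then 0 else if i == 1 then k.+1 else i.-1.
have pE i : val (p i) = pv (val i).
  case: (unliftP 0 i) => [j ->|->]; last by rewrite lift0_perm0.
  by rewrite lift0_perm_lift /= ord_pred_permE /pv; case: j => [[|j] ?].
pose Ms := row_perm p (col_perm p (\matrix_(i < k.+2, j < k.+2) A i j)).
rewrite -(det_conj_perm p) -/Ms -[\det Ms]expr1.
have -> : \matrix_(i < k, j < k) A i.+1 j.+1 = drsubmx Ms.
  by apply/matrixP=> i j; rewrite !mxE !pE.
rewrite -det_ulsubmx_adj det_mx22 !mxE /cofactor.
have -> : row' (lshift k 0) (col' (lshift k 0) Ms) =
    row_perm h (col_perm h (\matrix_(i < k.+1, j < k.+1) A i.+1 j.+1)).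
  apply/matrixP=> i j; rewrite !mxE !pE /= !ord_pred_permE /pv /=.
  by case: i => [[|i] ?]; case: j => [[|j] ?].
have -> : row' (lshift k 1) (col' (lshift k 1) Ms) =
    \matrix_(i < k.+1, j < k.+1) A i j.
  apply/matrixP=> i j; rewrite !mxE !pE /pv /=.
  by case: i => [[|i] ?]; case: j => [[|j] ?].
have -> : row' (lshift k 1) (col' (lshift k 0) Ms) =
    col_perm h (\matrix_(i < k.+1, j < k.+1) A i j.+1).
  apply/matrixP=> i j; rewrite !mxE !pE /= !ord_pred_permE /pv /=.
  by case: i => [[|i] ?]; case: j => [[|j] ?].
have -> : row' (lshift k 0) (col' (lshift k 1) Ms) =
    row_perm h (\matrix_(i < k.+1, j < k.+1) A i.+1 j).
  apply/matrixP=> i j; rewrite !mxE !pE /= !ord_pred_permE /pv /=.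
  by case: i => [[|i] ?]; case: j => [[|j] ?].
rewrite det_conj_perm det_row_perm det_col_perm.
rewrite (_ : (1 %% 2 + 1 %% 2)%N = 2) // expr2 mulrNN mulr1 mul1r !mulN1r mulrNN.
by rewrite mulrACA -signr_addb addbb !mul1r mulrC.
Qed.

Local Open Scope classical_set_scope.

Lemma measurable_funV d (T : measurableType d) (R : realType) (D : set T)
    (f : T -> R) :
  measurable_fun D f -> (forall x, D x -> 0 < f x) ->
  measurable_fun D (fun x => (f x)^-1).
Proof.
move=> mf f_gt0.
have minv : measurable_fun (`]0, +oo[ : set R) GRing.inv.
  apply: open_continuous_measurable_fun; first exact: interval_open.
  move=> x; rewrite inE /= in_itv /= andbT => x_gt0.
  by apply: inv_continuous; rewrite gt_eqF.
apply: (measurable_comp _ _ minv mf) => // _ [x Dx <-].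
by rewrite /= in_itv /= andbT f_gt0.
Qed.

Lemma ge0_integral_swap d1 d2 (T1 : measurableType d1) (T2 : measurableType d2)
    (R : realType) (m1 : {sigma_finite_measure set T1 -> \bar R})
    (m2 : {sigma_finite_measure set T2 -> \bar R}) (f : T1 * T2 -> \bar R) :
  measurable_fun setT f -> (forall z, (0 <= f z)%E) ->
  (\int[m2 \x m1]_z f (z.2, z.1) = \int[m1 \x m2]_z f z)%E.
Proof.
move=> mf f_ge0.
have mfswap : measurable_fun setT (fun z : T2 * T1 => f (z.2, z.1)).
  by apply: (measurableT_comp mf); exact: measurable_swap.
rewrite (fubini_tonelli1 (fun z : T2 * T1 => f (z.2, z.1))) //.
by rewrite (fubini_tonelli2 f).
Qed.

Section moments.
Variable R : realType.

Definition open_unit_square : set (R * R) := `]0, 1[ `*` `]0, 1[.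

Definition mom_integrand (s t i j : nat) (z : R * R) : R :=
  (z.1 ^+ (s + i) * z.2 ^+ (s + j) / (z.1 + z.2)) *
  ((1 - z.1) / (1 + z.1)) ^+ t * ((1 - z.2) / (1 + z.2)) ^+ t.

Lemma momE s t i j : mom R s t i j =
  fine (\int[(@lebesgue_measure R \x @lebesgue_measure R)%E]_(z in
    open_unit_square) (mom_integrand s t i j z)%:E).
Proof. by []. Qed.

Lemma measurable_open_unit_square : measurable open_unit_square.
Proof. by apply: measurableX; exact: measurable_itv. Qed.

Lemma open_unit_squareP (z : R * R) : open_unit_square z ->
  [/\ 0 < z.1, z.1 < 1, 0 < z.2 & z.2 < 1].
Proof. by case; rewrite /= !in_itv /= => /andP[? ?] /andP[? ?]. Qed.

Lemma open_unit_square_swap (z : R * R) :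
  ((z.2, z.1) \in open_unit_square) = (z \in open_unit_square).
Proof. by apply/idP/idP; rewrite !inE => -[? ?]; split. Qed.

Lemma measurable_mom_integrand s t i j :
  measurable_fun open_unit_square (mom_integrand s t i j).
Proof.
have m1 : measurable_fun open_unit_square (@fst R R).
  by apply: measurable_funTS; exact: measurable_fst.
have m2 : measurable_fun open_unit_square (@snd R R).
  by apply: measurable_funTS; exact: measurable_snd.
have mdiv (f g : R * R -> R) :
    measurable_fun open_unit_square f -> measurable_fun open_unit_square g ->
    (forall z, open_unit_square z -> 0 < g z) ->
    measurable_fun open_unit_square (fun z => f z / g z).
  by move=> mf mg g_gt0; apply: measurable_funM => //; exact: measurable_funV.
apply: measurable_funM; first apply: measurable_funM.
- apply: mdiv.
  + by apply: measurable_funM; exact: measurable_funX.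
  + exact: measurable_funD.
  + by move=> z /open_unit_squareP[]; lra.
- apply: measurable_funX; apply: mdiv.
  + exact: measurable_funB.
  + exact: measurable_funD.
  + by move=> z /open_unit_squareP[]; lra.
- apply: measurable_funX; apply: mdiv.
  + exact: measurable_funB.
  + exact: measurable_funD.
  + by move=> z /open_unit_squareP[]; lra.
Qed.

Lemma mom_integrand_ge0 s t i j z :
  open_unit_square z -> 0 <= mom_integrand s t i j z.
Proof.
move=> /open_unit_squareP[x_gt0 x_lt1 y_gt0 y_lt1].
rewrite /mom_integrand !mulr_ge0 ?exprn_ge0 ?divr_ge0 ?invr_ge0 //; lra.
Qed.

Lemma mom_integrand_swap s t i j z :
  mom_integrand s t i j (z.2, z.1) = mom_integrand s t j i z.
Proof. by rewrite /mom_integrand /= [z.2 + z.1]addrC; ring. Qed.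

Lemma mom_sym s t i j : mom R s t i j = mom R s t j i.
Proof.
rewrite !momE; congr fine; rewrite integral_mkcond [RHS]integral_mkcond.
pose g i j := (fun z => (mom_integrand s t i j z)%:E) \_ open_unit_square.
have gswap z : g i j (z.2, z.1) = g j i z.
  by rewrite /g /patch mom_integrand_swap open_unit_square_swap.
rewrite -/(g i j) -/(g j i).
have -> : g j i = fun z => g i j (z.2, z.1) by apply/funext => z; rewrite gswap.
rewrite ge0_integral_swap //.
- apply/(measurable_restrictT _ measurable_open_unit_square).
  by apply/measurable_EFinP; exact: measurable_mom_integrand.
- move=> z; rewrite /g /patch; case: ifPn => // /set_mem.
  by rewrite lee_fin; exact: mom_integrand_ge0.
Qed.

Lemma mom_shift s t i j : mom R s.+1 t i j = mom R s t i.+1 j.+1.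
Proof. by rewrite /mom !addSnnS. Qed.

End moments.

Theorem proposition3p1 (R : realType) (n s t : nat) :
  (1 <= n)%N ->
  tau R n.+1 s t * tau R n.-1 s.+1 t =
  tau R n s t * tau R n s.+1 t - xi R n s t ^+ 2.
Proof.
case: n => [//|k] _; rewrite /tau /xi /=.
have shift m : \matrix_(i < m, j < m) mom R s.+1 t i j =
               \matrix_(i < m, j < m) mom R s t i.+1 j.+1.
  by apply/matrixP=> i j; rewrite !mxE mom_shift.
have transpose : \det (\matrix_(i < k.+1, j < k.+1) mom R s t i.+1 j) =
                 \det (\matrix_(i < k.+1, j < k.+1) mom R s t i j.+1).
  by rewrite -det_tr; congr (\det _); apply/matrixP=> i j; rewrite !mxE mom_sym.
by rewrite !shift desnanot_jacobi transpose expr2.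
Qed.
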